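(* Let $\gamma$ be a POS for which there is a constant $c>0$ such that for every cylinder set $A$ there exists a time box $\Lambda$ with $A\in\mathcal F_{S\setminus\Lambda_+}$ and $\gamma_\Lambda(A,\omega)\ge c\,\gamma_\Lambda(A,\xi)$ for all $\omega,\xi\in\Omega$. Then $|\mathcal G(\gamma)|\le1$.
   Context: $(S,\le)$ is a countable partially ordered set. For $x\in S$ write $x_-=\{y\in S:y<x\}$, $x_+=\{y\in S:y>x\}$. For $\Upsilon\subset S$: $\max(\Upsilon)=\{x\in\Upsilon: y\notin\Upsilon\text{ for all }y>x\}$, $\min(\Upsilon)=\{x\in\Upsilon: y\notin\Upsilon\text{ for all }y<x\}$, the past $\Upsilon_-=\{x\in S\setminus\Upsilon:\exists y\in\Upsilon,\ x<y\}$, the future $\Upsilon_+=\{x\in S\setminus\Upsilon:\exists y\in\Upsilon,\ x>y\}$, and the outer time $\Upsilon^*=\{x\in S: x\text{ is comparable with no }y\in\Upsilon\}$. Standing assumptions: for every $x\in S$, $\max(x_-)$ and $\min(x_+)$ are finite, every $y<x$ satisfies $y\le y_0<x$ for some $y_0\in\max(x_-)$, every $z>x$ satisfies $z\ge z_0>x$ for some $z_0\in\min(x_+)$; and $S$ has no minimal element. A finite set $\Lambda\subset S$ is a time box if $\Lambda_-\cap\Lambda_+=\emptyset$. $(E,\mathcal E)$ is a measurable space, $\Omega=E^S$ with product $\sigma$-algebra $\mathcal F$; $\mathcal F_\Upsilon$ is generated by coordinates in $\Upsilon$; a cylinder set is an element of $\mathcal F_\Delta$ for some finite $\Delta$. A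 proper oriented kernel on a time box $\Lambda$ is a map $\gamma_\Lambda:\mathcal F_{S\setminus\Lambda_+}\times\Omega\to[0,1]$ such that (a) $\gamma_\Lambda(\cdot,\omega)$ is a probability measure; (b) $\gamma_\Lambda(A,\cdot)$ is $\mathcal F_{\Lambda_-\cup\Lambda^*}$-measurable for $A\in\mathcal F_{S\setminus\Lambda_+}$; (c) $\gamma_\Lambda(A,\cdot)$ is $\mathcal F_{\Lambda_-}$-measurable for $A\in\mathcal F_\Lambda$; (d) $\gamma_\Lambda(B,\omega)=\mathbf 1_B(\omega)$ for $B\in\mathcal F_{\Lambda_-\cup\Lambda^*}$. Compositions $(\gamma_\Delta\gamma_\Lambda)(f\mid\omega)=\int\gamma_\Lambda(f\mid\sigma)\gamma_\Delta(d\sigma,\omega)$, $(\mu\gamma_\Lambda)(f)=\int\gamma_\Lambda(f\mid\sigma)\mu(d\sigma)$ with $\gamma_\Lambda(f\mid\omega)=\int f\,d\gamma_\Lambda(\cdot,\omega)$. A POS is a family $\gamma=(\gamma_\Lambda)$ of proper oriented kernels indexed by all time boxes with $\gamma_\Delta\gamma_\Lambda=\gamma_\Delta$ on $\mathcal F_{S\setminus\Lambda_+}$ whenever $\Lambda\subset\Delta$. $\mathcal G(\gamma)$ is the set of probability measures $\mu$ with $\mu\gamma_\Lambda=\mu$ on $\mathcal F_{S\setminus\Lambda_+}$ for all time boxes $\Lambda$. *)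

From HB Require Import structures.
From mathcomp Require Import all_boot all_order all_algebra.
From mathcomp Require Import all_classical all_reals all_analysis measurable_realfun.
Set Implicit Arguments. Unset Strict Implicit. Unset Printing Implicit Defensive.
Import Order.TTheory GRing.Theory Num.Theory.
Local Open Scope classical_set_scope.
Local Open Scope ring_scope.

Section Poset.
Variables (S : Type) (le : S -> S -> Prop).

Definition lt (x y : S) : Prop := le x y /\ x <> y.

Definition xminus (x : S) : set S := [set y | lt y x].
Definition xplus (x : S) : set S := [set y | lt x y].

Definition maxs (U : set S) : set S := [set x | U x /\ forall y, lt x y -> ~ U y].
Definition mins (U : set S) : set S := [set x | U x /\ forall y, lt y x -> ~ U y].

Definition past (U : set S) : set S := [set x | ~ U x /\ exists y, U y /\ lt x y].
Definition future (U : set S) : set S := [set x | ~ U x /\ exists y, U y /\ lt y x].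
Definition outer (U : set S) : set S :=
  [set x | forall y, U y -> ~ (le x y \/ le y x)].

Record standing_poset : Prop := {
  sp_refl : forall x, le x x;
  sp_antisym : forall x y, le x y -> le y x -> x = y;
  sp_trans : forall x y z, le x y -> le y z -> le x z;
  sp_countable : exists f : S -> nat, injective f;
  sp_max_fin : forall x, finite_set (maxs (xminus x));
  sp_min_fin : forall x, finite_set (mins (xplus x));
  sp_max_cover : forall x y, lt y x -> exists2 y0, maxs (xminus x) y0 & le y y0;
  sp_min_cover : forall x z, lt x z -> exists2 z0, mins (xplus x) z0 & le z0 z;
  sp_no_min : forall x, exists y, lt y x }.

Definition time_box (L : set S) : Prop :=
  finite_set L /\ past L `&` future L = set0.

End Poset.

Section Config.
Variables (S : Type) (d : measure_display) (E : measurableType d).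

Definition cylgen (U : set S) : set (set (S -> E)) :=
  [set A | exists x B, U x /\ measurable B /\ A = (fun w : S -> E => w x) @^-1` B].

Definition FU (U : set S) (A : set (S -> E)) : Prop := <<s cylgen U >> A.

Definition cylinder (A : set (S -> E)) : Prop :=
  exists D : set S, finite_set D /\ FU D A.

End Config.
Arguments cylgen {S d} E U.
Arguments FU {S d} E U A.
Arguments cylinder {S d} E A.

Notation OmegaU E U := (g_sigma_algebraType (@cylgen _ _ E U)).

Section Kernels.
Variables (S : Type) (le : S -> S -> Prop) (d : measure_display)
  (E : measurableType d) (R : realType).

Definition FU_measurable (U : set S) (f : (S -> E) -> \bar R) : Prop :=
  @measurable_fun _ _ (OmegaU E U) _ setT f.

(* A family of kernels: for each L, omega, a probability measure on F_{S \ L_+} *)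
Definition kernel_family :=
  forall (L : set S), (S -> E) -> probability (OmegaU E (~` future le L)) R.

Definition proper_oriented (g : kernel_family) (L : set S) : Prop :=
  (forall A, FU E (~` future le L) A ->
     FU_measurable (past le L `|` outer le L) (fun w => g L w A)) /\
  (forall A, FU E L A -> FU_measurable (past le L) (fun w => g L w A)) /\
  (forall B, FU E (past le L `|` outer le L) B ->
     forall w, g L w B = ((\1_B w : R))%:E).

(* POS: proper oriented kernels on time boxes, consistent
   (gamma_D gamma_L = gamma_D where both sides are defined) *)
Definition POS (g : kernel_family) : Prop :=
  (forall L, time_box le L -> proper_oriented g L) /\
  (forall L D, time_box le L -> time_box le D -> L `<=` D ->
     forall A, FU E (~` future le L) A -> FU E (~` future le D) A ->
     forall w, (\int[g D w]_s g L s A)%E = g D w A).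

Definition Gibbs (g : kernel_family) (mu : probability (OmegaU E setT) R) : Prop :=
  forall L, time_box le L -> forall A, FU E (~` future le L) A ->
    (\int[mu]_s g L s A)%E = mu A.

End Kernels.
Arguments FU_measurable {S d} E R U f.
Arguments kernel_family {S} le {d} E R.
Arguments proper_oriented {S le d E R} g L.
Arguments POS {S le d E R} g.
Arguments Gibbs {S le d E R} g mu.

From HB Require Import structures.
From mathcomp Require Import all_boot all_order all_algebra.
From mathcomp Require Import all_classical all_reals all_analysis measurable_realfun.
From mathcomp Require Import lra.

Set Implicit Arguments.
Unset Strict Implicit.
Unset Printing Implicit Defensive.
Import Order.TTheory GRing.Theory Num.Theory.
Import numFieldNormedType.Exports.
Local Open Scope classical_set_scope.
Local Open Scope ring_scope.

(* Integrating the uniform minorization of the kernels against two Gibbs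
   measures mu, nu gives c nu <= mu on cylinder sets, hence on all events by a
   monotone class argument.  The normalized residual (mu - c nu) / (1 - c) is
   again a Gibbs probability measure, so repeating the argument with it in place
   of mu yields mu A <= nu A + (1 - c)^n for every n.  Letting n grow and
   exchanging mu and nu gives mu = nu. *)

Section Domination.
Context d (T : measurableType d) (R : realType).
Local Open Scope ereal_scope.

Lemma dominated_g_sigma_ring (mu nu : {finite_measure set T -> \bar R}) (c : R)
    (G : set (set T)) :
  (0 <= c)%R -> setring G -> G `<=` measurable ->
  (forall A, G A -> c%:E * nu A <= mu A) ->
  forall A, <<sr G>> A -> c%:E * nu A <= mu A.
Proof.
move=> c0 ringG mG domG A GA.
suff [] : [set A | measurable A /\ c%:E * nu A <= mu A] A by [].
apply: (monotone_setring_sub_g_sigma_ring _ ringG _ GA); last first.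
  by move=> B GB; split; [exact: mG | exact: domG].
split=> F monoF domF; have mF i : measurable (F i) by case: (domF i).
- have mUF : measurable (\bigcup_i F i) by exact: bigcupT_measurable.
  split=> //; apply: (@lee_cvg_to _ \oo _ _ (fun n => c%:E * nu (F n)) (mu \o F)).
  + by apply: cvgeZl => //; exact: nondecreasing_cvg_mu.
  + exact: nondecreasing_cvg_mu.
  + by apply: nearW => n; case: (domF n).
- have mIF : measurable (\bigcap_i F i) by exact: bigcapT_measurable.
  split=> //; apply: (@lee_cvg_to _ \oo _ _ (fun n => c%:E * nu (F n)) (mu \o F)).
  + apply: cvgeZl => //; apply: nonincreasing_cvg_mu => //.
    by rewrite ltey_eq fin_num_measure.
  + apply: nonincreasing_cvg_mu => //.
    by rewrite ltey_eq fin_num_measure.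
  + by apply: nearW => n; case: (domF n).
Qed.

Lemma le_integral_uniform_ratio (mu nu : probability T R) (f : T -> \bar R)
    (c : R) :
  (0 <= c)%R -> measurable_fun setT f -> (forall x, 0 <= f x) ->
  (forall x y, c%:E * f x <= f y) ->
  c%:E * \int[nu]_x f x <= \int[mu]_x f x.
Proof.
move=> c0 mf f0 ratio.
have cf_le x : c%:E * f x <= \int[mu]_y f y.
  rewrite -[leLHS]mule1 -(probability_setT mu) -integral_cst //.
  apply: ge0_le_integral => //.
  - by move=> y _; apply: mule_ge0.
  - by move=> y _; exact: ratio.
rewrite -ge0_integralZl // -[leRHS]mule1 -(probability_setT nu) -integral_cst //.
apply: ge0_le_integral => //.
- by move=> x _; apply: mule_ge0.
- exact: measurable_funeM.
Qed.

End Domination.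

Lemma ler_of_ler_addr_expr (R : realType) (q x y : R) :
  0 <= q < 1 -> (forall n, x <= y + q ^+ n) -> x <= y.
Proof.
move=> /andP[q0 q1] h.
apply: (@ler_cvg_to _ \oo _ _ (fun=> x) (fun n => y + q ^+ n)).
- exact: cvg_cst.
- rewrite -[y in _ --> y]addr0; apply: cvgD; first exact: cvg_cst.
  by apply: cvg_expr; rewrite ger0_norm.
- exact: nearW.
Qed.

Lemma lee_convex_addr (R : realDomainType) (c q : R) (x y : \bar R) :
  c <= 1 -> x \is a fin_num -> y \is a fin_num -> (x <= y + q%:E)%E ->
  ((1 - c)%:E * x + c%:E * y <= y + ((1 - c) * q)%:E)%E.
Proof.
move: x y => [x| |] [y| |] // c_le1 _ _.
rewrite -!EFinM -!EFinD !lee_fin => xle.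
have : (1 - c) * x <= (1 - c) * (y + q) by rewrite ler_wpM2l // subr_ge0.
by rewrite mulrDr; lra.
Qed.

Section Residual.
Context d (T : measurableType d) (R : realType).
Local Open Scope ereal_scope.
Variables (mu nu : probability T R) (c : R).
Hypotheses (c_ge0 : (0 <= c)%R) (c_lt1 : (c < 1)%R)
  (nu_le_mu : forall A, measurable A -> c%:E * nu A <= mu A).

Let c1_neq0 : (1 - c != 0)%R. Proof. by rewrite subr_eq0 gt_eqF. Qed.

(* Restricting to [setT] makes the charge vanish on non-measurable sets, as
   [measure_of_charge] asks for nonnegativity everywhere. *)
Definition residual_charge := crestr0 (cscale (1 - c)^-1
  (cadd (charge_of_finite_measure mu)
        (cscale (- c) (charge_of_finite_measure nu)))) (@measurableT _ T).

Lemma residual_chargeE A : measurable A ->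
  residual_charge A = ((1 - c)^-1)%:E * (mu A - c%:E * nu A).
Proof.
move=> mA; rewrite /residual_charge /crestr0 mem_set// /crestr setIT.
rewrite /cscale /cadd /= /charge_of_finite_measure; unfold cadd; simpl.
by rewrite /cscale EFinN mulNe.
Qed.

Lemma residual_charge_ge0 A : 0 <= residual_charge A.
Proof.
have [mA|nmA] := pselect (measurable A); last by rewrite /residual_charge /crestr0 memNset.
rewrite residual_chargeE // mule_ge0 //.
  by rewrite lee_fin invr_ge0 subr_ge0 ltW.
by rewrite subre_ge0 ?nu_le_mu // fin_num_measure.
Qed.

Definition residual := measure_of_charge residual_charge residual_charge_ge0.
HB.instance Definition _ := Measure.on residual.

Lemma residualE A : measurable A ->
  residual A = ((1 - c)^-1)%:E * (mu A - c%:E * nu A).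
Proof. exact: residual_chargeE. Qed.

Lemma residual_setT : residual setT = 1.
Proof. by rewrite residualE // !probability_setT mule1 -EFinB -EFinM mulVf. Qed.

HB.instance Definition _ :=
  Measure_isProbability.Build _ _ _ residual residual_setT.

Lemma residual_decomp A : measurable A ->
  mu A = (1 - c)%:E * residual A + c%:E * nu A.
Proof.
move=> mA; rewrite residualE // muleA -EFinM mulfV // mul1e.
by rewrite subeK // fin_numM // fin_num_measure.
Qed.

Lemma ge0_integral_residual_decomp (f : T -> \bar R) :
  measurable_fun setT f -> (forall x, 0 <= f x) ->
  \int[mu]_x f x = (1 - c)%:E * \int[residual]_x f x + c%:E * \int[nu]_x f x.
Proof.
move=> mf f0.
have c1_ge0 : (0 <= 1 - c)%R by rewrite subr_ge0 ltW.
pose rho' := mscale (NngNum c1_ge0) residual; pose nu' := mscale (NngNum c_ge0) nu.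
rewrite (@eq_measure_integral _ _ _ _ (measure_add rho' nu') mu); last first.
  move=> A mA _; apply: (eq_trans (residual_decomp mA)).
  exact/esym/(measure_addE rho' nu').
by rewrite ge0_integral_measure_add // !ge0_integral_mscale.
Qed.

End Residual.

Section Cylinders.
Context (S : Type) (d : measure_display) (E : measurableType d).

Lemma FU_subset (U V : set S) (A : set (S -> E)) :
  U `<=` V -> FU E U A -> FU E V A.
Proof.
move=> UV; apply: sub_sigma_algebra2 => _ [x [B [Ux [mB ->]]]].
by exists x, B; split=> //; exact: UV.
Qed.

Lemma FU_measurableT (R : realType) (U : set S) (f : (S -> E) -> \bar R) :
  FU_measurable E R U f -> measurable_fun (T := OmegaU E setT) setT f.
Proof. by move=> mf _ B mB; apply: (@FU_subset U) => //; exact: mf. Qed.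

Lemma cylinder_setring : setring (@cylinder S _ E).
Proof.
split.
- by exists set0; split => //; exact: (@measurable0 _ (OmegaU E set0)).
- move=> A1 A2 [D1 [fD1 h1]] [D2 [fD2 h2]]; exists (D1 `|` D2).
  split; first by rewrite finite_setU.
  apply: (@measurableU _ (OmegaU E _)).
  + exact: FU_subset (@subsetUl _ D1 D2) h1.
  + exact: FU_subset (@subsetUr _ D1 D2) h2.
- move=> A1 A2 [D1 [fD1 h1]] [D2 [fD2 h2]]; exists (D1 `|` D2).
  split; first by rewrite finite_setU.
  apply: (@measurableD _ (OmegaU E _)).
  + exact: FU_subset (@subsetUl _ D1 D2) h1.
  + exact: FU_subset (@subsetUr _ D1 D2) h2.
Qed.

Lemma cylinder_FUT (A : set (S -> E)) : @cylinder S _ E A -> FU E setT A.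
Proof. by move=> [D [_ FA]]; exact: FU_subset FA. Qed.

Lemma FUT_g_sigma_ring_cylinder (A : set (S -> E)) :
  FU E setT A -> <<sr @cylinder S _ E>> A.
Proof.
have cylT : @cylinder S _ E setT.
  by exists set0; split => //; exact: (@measurableT _ (OmegaU E set0)).
have [s0 sD sU] := smallest_sigma_ring (@cylinder S _ E).
apply: smallest_sub.
  by split => // B hB; apply: sD => // F [_ GF]; exact: GF.
move=> _ [x [B [_ [mB ->]]]] F [_ GF]; apply: GF.
exists [set x]; split; first exact: finite_set1.
by apply: sub_sigma_algebra; exists x, B.
Qed.

End Cylinders.

Section Uniqueness.
Variables (S : Type) (le : S -> S -> Prop) (d : measure_display)
  (E : measurableType d) (R : realType) (g : kernel_family le E R).
Hypothesis g_proper : forall L, time_box le L -> proper_oriented g L.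
Variable c : R.
Hypotheses (c_gt0 : 0 < c) (c_lt1 : c < 1).
Hypothesis g_minorized : forall A, cylinder E A ->
  exists L, time_box le L /\ FU E (~` future le L) A /\
    forall w xi, (c%:E * g L xi A <= g L w A)%E.

Local Notation Omega := (OmegaU E setT).
Local Open Scope ereal_scope.

Let c_ge0 : (0 <= c)%R := ltW c_gt0.
Let c1_neq0 : (1 - c != 0)%R. Proof. by rewrite subr_eq0 gt_eqF. Qed.

Lemma kernel_measurable L B : time_box le L -> FU E (~` future le L) B ->
  measurable_fun (T := Omega) setT (fun w => g L w B).
Proof. by move=> boxL FB; apply: FU_measurableT; exact: (g_proper boxL).1. Qed.

Lemma Gibbs_dominated (mu nu : probability Omega R) :
  Gibbs g mu -> Gibbs g nu -> forall A, measurable A -> c%:E * nu A <= mu A.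
Proof.
move=> Gmu Gnu A /FUT_g_sigma_ring_cylinder.
have dom_cyl B : cylinder E B -> c%:E * nu B <= mu B.
  move=> /g_minorized [L [boxL [FB minor]]].
  rewrite -(Gmu L boxL B FB) -(Gnu L boxL B FB).
  by apply: le_integral_uniform_ratio => //; exact: kernel_measurable.
exact: (dominated_g_sigma_ring (mu := mu) (nu := nu) c_ge0
  (@cylinder_setring S d E) (@cylinder_FUT S d E) dom_cyl).
Qed.

Lemma Gibbs_residual (mu nu : probability Omega R)
    (Gmu : Gibbs g mu) (Gnu : Gibbs g nu) :
  Gibbs g (residual c_lt1 (Gibbs_dominated Gmu Gnu)).
Proof.
move=> L boxL B FB.
have mB : measurable (B : set Omega) := FU_subset (@subsetT _ _) FB.
have := ge0_integral_residual_decomp c_ge0 c_lt1 (Gibbs_dominated Gmu Gnu)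
  (kernel_measurable boxL FB) (fun w => measure_ge0 _ _).
rewrite (Gmu L boxL B FB) (Gnu L boxL B FB).
rewrite (residual_decomp c_lt1 (Gibbs_dominated Gmu Gnu) mB).
move=> /(congr1 (fun x => ((1 - c)^-1)%:E * (x - c%:E * nu B))) /=.
by rewrite !addeK ?fin_numM ?fin_num_measure // !muleA -EFinM mulVf // !mul1e => ->.
Qed.

Lemma Gibbs_le_addr_expr n (mu nu : probability Omega R) :
  Gibbs g mu -> Gibbs g nu ->
  forall A, measurable A -> mu A <= nu A + ((1 - c) ^+ n)%:E.
Proof.
elim: n mu nu => [|n IH] mu nu Gmu Gnu A mA.
  by rewrite expr0 (le_trans (probability_le1 _ mA)) // lee_paddl.
rewrite (residual_decomp c_lt1 (Gibbs_dominated Gmu Gnu) mA) exprS.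
apply: lee_convex_addr; rewrite ?fin_num_measure //; first exact: ltW.
exact: (IH _ _ (Gibbs_residual Gmu Gnu)).
Qed.

Lemma Gibbs_le (mu nu : probability Omega R) :
  Gibbs g mu -> Gibbs g nu -> forall A, measurable A -> mu A <= nu A.
Proof.
move=> Gmu Gnu A mA.
rewrite -(fineK (fin_num_measure mu _ mA)) -(fineK (fin_num_measure nu _ mA)).
rewrite lee_fin; apply: (@ler_of_ler_addr_expr _ (1 - c)).
  by rewrite subr_ge0 ltW //= ltrBlDr ltrDl.
move=> n; rewrite -lee_fin EFinD !fineK ?fin_num_measure //.
exact: Gibbs_le_addr_expr.
Qed.
End Uniqueness.

Theorem mainTheorem11 (S : Type) (le : S -> S -> Prop)
  (d : measure_display) (E : measurableType d) (R : realType)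
  (g : kernel_family le E R) :
  standing_poset le ->
  POS g ->
  (exists c : R, 0 < c /\
     forall A : set (S -> E), cylinder E A ->
       exists L : set S, time_box le L /\ FU E (~` future le L) A /\
         forall w xi : S -> E, (c%:E * g L xi A <= g L w A)%E) ->
  forall mu nu : probability (OmegaU E setT) R,
    Gibbs g mu -> Gibbs g nu ->
    forall A : set (S -> E), FU E setT A -> mu A = nu A.
Proof.
move=> _ [g_proper _] [c0 [c0_gt0 minor0]] mu nu Gmu Gnu A mA.
(* Shrinking the constant keeps the minorization and makes 1 - c invertible. *)
pose c := Num.min c0 (1 / 2).
have c_gt0 : 0 < c by rewrite lt_min c0_gt0 divr_gt0.
have c_lt1 : c < 1 by rewrite gt_min ltr_pdivrMr // mul1r ltr1n orbT.
have minor B : cylinder E B -> exists L, time_box le L /\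
    FU E (~` future le L) B /\ forall w xi, (c%:E * g L xi B <= g L w B)%E.
  move=> /minor0 [L [boxL [FB bound]]]; exists L; split=> //; split=> // w xi.
  by apply: le_trans (bound w xi); rewrite lee_wpmul2r // lee_fin ge_min lexx.
by apply: le_anti; rewrite !(Gibbs_le g_proper c_gt0 c_lt1 minor).
Qed.
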